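(* Let $r\ge 4$, $H\in(0,1)$, $\tau>0$, and let $X=X^*_{\tau(1-H)}$. Then $X$ is $r$-robust, and for every $\eta\in[0,H]$: if $T=\tau(1+\eta)$ then $T/\ell(X,T)\le\min\{c_r(1+\eta)/(1-H),\,r\}$, and if $T=\tau(1-\eta)$ then $T/\ell(X,T)\le\min\{c_r(1-\eta)/(1-H),\,r\}$. In particular $T/\ell(X,T)\le \min\{c_r(1+H)/(1-H),\,r\}$ for every $T\in[\tau(1-H),\tau(1+H)]$.
   Context: A schedule is an increasing sequence $X=(x_i)_{i\ge1}$ of positive reals (contract lengths), with completion times $S_i=\sum_{j=1}^i x_j$. For $T>0$, $\ell(X,T)=\max\{x_i: S_i\le T\}$ ($0$ if none). The robustness of $X$ is $\sup_{i\ge2}S_i/x_{i-1}$; $X$ is $r$-robust if this is at most $r$. For $r\ge4$ let $c_r=\frac{r-\sqrt{r^2-4r}}{2}$ and $b_r=\frac{r+\sqrt{r^2-4r}}{2}$. For $\sigma>0$, $X^*_\sigma$ denotes the schedule $(\gamma b_r^i)_{i\ge1}$ where $\gamma>0$ is chosen so that $\sum_{i=1}^m\gamma b_r^i=\sigma$ for some integer $m\ge1$. The prediction is $\tau$, the interruption is $T$, and the error $\eta$ is defined by $T=\tau(1+\eta)$ if $T\ge\tau$ and $T=\tau(1-\eta)$ if $T\le \tau$; it is assumed that $\eta\le H$ with $H$ known to the schedule. *)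

From mathcomp Require Import all_boot all_order all_algebra.
From mathcomp Require Import classical_sets boolp reals.
Set Implicit Arguments. Unset Strict Implicit. Unset Printing Implicit Defensive.
Import Order.TTheory GRing.Theory Num.Theory.
Local Open Scope ring_scope.
Local Open Scope classical_set_scope.

Section Defs.
Variable R : realType.

(* A schedule is a sequence x : nat -> R, indexed from 1 (x 0 is unused). *)
Definition compl (x : nat -> R) (i : nat) : R := \sum_(1 <= j < i.+1) x j.

(* l(X,T) = max { x_i : i >= 1, S_i <= T }, and 0 if this set is empty.
   The set is finite for the schedules considered, so sup = max. *)
Definition ell (x : nat -> R) (T : R) : R :=
  let A := [set x i | i in [set i : nat | (1 <= i)%N /\ compl x i <= T]] in
  if `[< A = set0 >] then 0 else sup A.

Definition r_robust (x : nat -> R) (r : R) : Prop :=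
  forall i : nat, (2 <= i)%N -> compl x i / x i.-1 <= r.

Definition c_r (r : R) : R := (r - Num.sqrt (r ^+ 2 - 4 * r)) / 2.
Definition b_r (r : R) : R := (r + Num.sqrt (r ^+ 2 - 4 * r)) / 2.

Definition Xstar (r sigma : R) (m : nat) : nat -> R :=
  let gamma := sigma / \sum_(1 <= i < m.+1) b_r r ^+ i in
  fun i => gamma * b_r r ^+ i.
End Defs.

From mathcomp Require Import all_boot all_order all_algebra.
From mathcomp Require Import classical_sets boolp reals.
From mathcomp Require Import ring lra.
Import Order.TTheory GRing.Theory Num.Theory.
Local Open Scope ring_scope.

(* Write B = b_r and c = c_r, the roots of z^2 - r z + r; hence
   r (B - 1) = B^2 and c (B - 1) = B, with B >= 2 (first block of lemmas).
   General schedules (section Schedules): with nonnegative contracts bounded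
   below, once T >= S_m there is a last contract k >= m finishing by T, i.e.
   S_k <= T < S_(k+1), and ell(X,T) dominates x_m and x_k.
   Geometric schedules x_i = g B^i (section Geometric): the closed form
   (B - 1) S_n = g (B^(n+1) - B) gives (B - 1) S_n <= B x_n, which yields
   both S_(k+1) <= r x_k (robustness) and S_n <= c x_n.
   For X = X*_sigma (section Xstar) we have S_m = sigma, so for sigma <= T:
     T < S_(k+1) <= r x_k <= r ell(X,T)   and   sigma <= c x_m <= c ell(X,T),
   i.e. T/ell <= r and T/ell <= c T/sigma.  The theorem follows with
   sigma = tau (1 - H) and T = tau (1 +- eta), resp. T <= tau (1 + H). *)

Lemma sqr_sqrt_discr {R : realType} {r : R} : 4 <= r ->
  Num.sqrt (r ^+ 2 - 4 * r) ^+ 2 = r ^+ 2 - 4 * r.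
Proof. by move=> r_ge4; rewrite sqr_sqrtr // expr2 -mulrBl mulr_ge0 //; lra. Qed.

Lemma b_r_ge2 {R : realType} {r : R} : 4 <= r -> 2 <= b_r r.
Proof.
by move=> r_ge4; have := sqrtr_ge0 (r ^+ 2 - 4 * r); rewrite /b_r; lra.
Qed.

Lemma r_b_r {R : realType} {r : R} : 4 <= r -> r * (b_r r - 1) = b_r r ^+ 2.
Proof. by move=> /sqr_sqrt_discr; rewrite /b_r; nra. Qed.

Lemma c_r_b_r {R : realType} {r : R} : 4 <= r -> c_r r * (b_r r - 1) = b_r r.
Proof. by move=> /sqr_sqrt_discr; rewrite /b_r /c_r; nra. Qed.

Lemma c_r_gt0 {R : realType} {r : R} : 4 <= r -> 0 < c_r r.
Proof. by move=> r_ge4; have := c_r_b_r r_ge4; have := b_r_ge2 r_ge4; nra. Qed.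

Section Schedules.
Context {R : realType} {x : nat -> R}.
Hypothesis x_ge0 : forall i, 0 <= x i.

Lemma complS n : compl x n.+1 = compl x n + x n.+1.
Proof. by rewrite /compl big_nat_recr. Qed.

Lemma compl_ge0 n : 0 <= compl x n.
Proof. by apply: sumr_ge0 => i _. Qed.

Lemma term_le_compl {i} : (1 <= i)%N -> x i <= compl x i.
Proof. by case: i => // i _; rewrite complS lerDr compl_ge0. Qed.

Lemma compl_le {i j} : (i <= j)%N -> compl x i <= compl x j.
Proof.
elim: j => [|j IH]; first by rewrite leqn0 => /eqP ->.
rewrite leq_eqVlt => /orP[/eqP -> //|]; rewrite ltnS => /IH.
by rewrite complS => /le_trans; apply; rewrite lerDl.
Qed.

Lemma compl_unbounded {a : R} : 0 < a -> (forall i, (1 <= i)%N -> a <= x i) ->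
  forall T, exists n, T < compl x n.
Proof.
move=> a_gt0 x_ge_a T.
have compl_ge_lin n : n%:R * a <= compl x n.
  elim: n => [|n IH]; first by rewrite mul0r compl_ge0.
  by rewrite complS -natr1 mulrDl mul1r lerD // x_ge_a.
have [T_gt0|T_le0] := ltrP 0 T; last first.
  by exists 1%N; have := compl_ge_lin 1%N; rewrite mul1r; lra.
exists (Num.bound (T / a)); apply: lt_le_trans (compl_ge_lin _).
by rewrite -ltr_pdivrMr // archi_boundP // divr_ge0 // ltW.
Qed.

Lemma ell_ge_term {T i} : (1 <= i)%N -> compl x i <= T -> x i <= ell x T.
Proof.
move=> i_ge1 iT.
pose A := [set x j | j in [set j : nat | (1 <= j)%N /\ compl x j <= T]]%classic.
have Ai : A (x i) by exists i.
have ubA : forall y, A y -> y <= T.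
  by move=> y [j [j_ge1 jT] <-]; apply: le_trans (term_le_compl j_ge1) jT.
rewrite /ell /= -/A asboolF; last by move=> A0; rewrite A0 in Ai.
by apply: (sup_upper_bound _ Ai); split; [exists (x i) | exists T].
Qed.

Lemma last_finished {T m} : (1 <= m)%N -> compl x m <= T ->
  (exists n, T < compl x n) ->
  exists2 k, (m <= k)%N & compl x k <= T < compl x k.+1.
Proof.
move=> m_ge1 mT [n Tn].
pose P i := (m <= i)%N && (compl x i <= T).
have exP : exists i, P i by exists m; rewrite /P leqnn mT.
have ubP i : P i -> (i <= n)%N.
  case/andP=> _ iT; rewrite leqNgt; apply/negP => /ltnW /compl_le.
  by move/(lt_le_trans Tn); rewrite ltNge iT.
case: (ex_maxnP exP ubP) => k /andP[mk kT] k_max.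
exists k => //; rewrite kT ltNge; apply/negP => k1T.
by have := k_max k.+1; rewrite /P k1T (leq_trans mk) // ltnn => /(_ isT).
Qed.

Lemma le_r_ell {r T : R} {m} : (1 <= m)%N -> compl x m <= T ->
  (exists n, T < compl x n) -> 0 <= r ->
  (forall k, compl x k.+1 <= r * x k) -> T <= r * ell x T.
Proof.
move=> m_ge1 mT unb r_ge0 robust.
have [k mk /andP[kT Tk1]] := last_finished m_ge1 mT unb.
apply: ltW (lt_le_trans Tk1 (le_trans (robust k) _)).
by rewrite ler_wpM2l // ell_ge_term // (leq_trans m_ge1).
Qed.

End Schedules.

Section Geometric.
Variables (R : realType) (B g : R).

Lemma compl_geometric n :
  (B - 1) * compl (fun i => g * B ^+ i) n = g * B ^+ n.+1 - g * B.
Proof.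
elim: n => [|n IH]; first by rewrite /compl big_geq // mulr0 expr1 subrr.
by rewrite complS mulrDr IH [in RHS]exprS; ring.
Qed.

Lemma compl_geometric_le n : 0 <= g -> 0 <= B ->
  (B - 1) * compl (fun i => g * B ^+ i) n <= B * (g * B ^+ n).
Proof.
move=> g_ge0 B_ge0; have := mulr_ge0 g_ge0 B_ge0.
by rewrite compl_geometric exprS; lra.
Qed.

End Geometric.

Section Xstar.
Context {R : realType} {r sigma : R} {m : nat}.
Hypotheses (r_ge4 : 4 <= r) (sigma_gt0 : 0 < sigma) (m_ge1 : (1 <= m)%N).

Let B := b_r r.
Let gamma := sigma / \sum_(1 <= i < m.+1) B ^+ i.
Let X := Xstar r sigma m.
Let XE i : X i = gamma * B ^+ i. Proof. by []. Qed.

Let B_gt1 : 1 < B. Proof. by have := b_r_ge2 r_ge4; rewrite -/B; lra. Qed.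
Let Bm1_gt0 : 0 < B - 1. Proof. by rewrite subr_gt0. Qed.
Let powB_gt0 i : 0 < B ^+ i. Proof. by rewrite exprn_gt0 // (lt_trans ltr01). Qed.

Let geom_sum_gt0 : 0 < \sum_(1 <= i < m.+1) B ^+ i.
Proof.
rewrite -(prednK m_ge1) big_nat_recr //= ltr_wpDl ?powB_gt0 //.
by apply: sumr_ge0 => i _; rewrite ltW.
Qed.

Let gamma_gt0 : 0 < gamma. Proof. by rewrite divr_gt0. Qed.
Let X_gt0 i : 0 < X i. Proof. by rewrite mulr_gt0. Qed.
Let X_ge0 i : 0 <= X i. Proof. exact: ltW. Qed.

Let compl_X_le n : (B - 1) * compl X n <= B * X n.
Proof. by apply: compl_geometric_le; rewrite ltW // (lt_trans ltr01). Qed.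

Lemma compl_Xstar : compl X m = sigma.
Proof. by rewrite /compl /X /Xstar -mulr_sumr divfK // gt_eqF. Qed.

(* Step robustness: S_(k+1) <= r x_k, from r (B - 1) = B^2. *)
Lemma Xstar_robust_step k : compl X k.+1 <= r * X k.
Proof.
rewrite -(ler_pM2l Bm1_gt0); apply: (le_trans (compl_X_le _)).
suff -> : (B - 1) * (r * X k) = B * X k.+1 by [].
by rewrite mulrA (mulrC (B - 1)) r_b_r // -/B !XE expr2 exprS; ring.
Qed.

(* The m-th contract is long: sigma <= c_r x_m, from c_r (B - 1) = B. *)
Lemma sigma_le_c_Xstar : sigma <= c_r r * X m.
Proof.
rewrite -compl_Xstar -(ler_pM2l Bm1_gt0); apply: (le_trans (compl_X_le _)).
by rewrite (mulrA (B - 1)) (mulrC (B - 1)) c_r_b_r.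
Qed.

Lemma Xstar_robust : r_robust X r.
Proof.
by move=> [|[|k]] // _; rewrite ler_pdivrMr ?X_gt0 //; apply: Xstar_robust_step.
Qed.

Lemma Xstar_competitive T T' : sigma <= T -> T <= T' ->
  0 < ell X T /\ T / ell X T <= Num.min (c_r r * T' / sigma) r.
Proof.
move=> sigmaT TT'.
have mT : compl X m <= T by rewrite compl_Xstar.
have Xm_le : X m <= ell X T := ell_ge_term X_ge0 m_ge1 mT.
have ell_gt0 : 0 < ell X T := lt_le_trans (X_gt0 m) Xm_le.
have unb : exists n, T < compl X n.
  apply: (compl_unbounded X_ge0 gamma_gt0) => i _.
  by rewrite XE ler_peMr ?exprn_ege1 ?ltW.
split => //; rewrite le_min !ler_pdivrMr //; apply/andP; split.
  have sigma_le : sigma <= c_r r * ell X T.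
    by apply: le_trans sigma_le_c_Xstar _; rewrite ler_pM2l ?c_r_gt0.
  have -> : c_r r * T' / sigma * ell X T = T' * (c_r r * ell X T / sigma) by ring.
  rewrite (le_trans TT') // ler_peMr ?ler_pdivlMr ?mul1r //.
  exact: le_trans (ltW sigma_gt0) (le_trans sigmaT TT').
have r_ge0 : 0 <= r by exact: le_trans _ r_ge4.
exact: (le_r_ell X_ge0 m_ge1 mT unb r_ge0 Xstar_robust_step).
Qed.

End Xstar.

Theorem lemma2 (R : realType) (r H tau : R) (m : nat) :
  4 <= r -> 0 < H < 1 -> 0 < tau -> (1 <= m)%N ->
  let X := Xstar r (tau * (1 - H)) m in
  r_robust X r /\
  (forall eta : R, 0 <= eta <= H ->
     (let T := tau * (1 + eta) in
      0 < ell X T /\ T / ell X T <= Num.min (c_r r * (1 + eta) / (1 - H)) r) /\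
     (let T := tau * (1 - eta) in
      0 < ell X T /\ T / ell X T <= Num.min (c_r r * (1 - eta) / (1 - H)) r)) /\
  (forall T : R, tau * (1 - H) <= T <= tau * (1 + H) ->
     0 < ell X T /\ T / ell X T <= Num.min (c_r r * (1 + H) / (1 - H)) r).
Proof.
move=> r_ge4 /andP[H_gt0 H_lt1] tau_gt0 m_ge1 X.
have sigma_gt0 : 0 < tau * (1 - H) by rewrite mulr_gt0 // subr_gt0.
have bound a T : tau * (1 - H) <= T -> T <= tau * a ->
    0 < ell X T /\ T / ell X T <= Num.min (c_r r * a / (1 - H)) r.
  move=> sigmaT Ta.
  have -> : c_r r * a / (1 - H) = c_r r * (tau * a) / (tau * (1 - H)).
    by field; rewrite subr_eq0 gt_eqF // gt_eqF.
  exact: Xstar_competitive.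
split; first exact: Xstar_robust r_ge4 sigma_gt0 m_ge1.
split=> [eta /andP[eta_ge0 eta_leH]|T /andP[sigmaT T_le]]; last exact: bound.
by split; apply: bound; rewrite ?ler_pM2l //; lra.
Qed.
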